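(* Let $G$ be a finite group, let $M$ be a subgroup of $G$, and let $K$ be a normal subgroup of $G$ contained in $M$. Suppose that $G$ is a split extension of $K$ by $G/K$ (that is, $K$ has a complement in $G$). Then $M$ is a perfect code of $G$ if and only if $M/K$ is a perfect code of $G/K$.
   Context: For a group $G$ with identity $e$ and an inverse-closed subset $S\subseteq G\setminus\{e\}$, the Cayley graph $\mathrm{Cay}(G,S)$ has vertex set $G$ and edges $\{g,sg\}$ for $s\in S$, $g\in G$. A perfect code in a graph is an independent set $C$ of vertices such that every vertex outside $C$ is adjacent to exactly one vertex of $C$. A subgroup $H$ of $G$ is a perfect code of $G$ if some Cayley graph of $G$ admits $H$ as a perfect code. *)

From mathcomp Require Import all_boot all_fingroup.
Set Implicit Arguments. Unset Strict Implicit. Unset Printing Implicit Defensive.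
Local Open Scope group_scope.

Section PerfectCode.
Variable gT : finGroupType.

(* Adjacency in Cay(G,S): edges {g, s g} for s in S, so x ~ y iff y x^-1 \in S. *)
Definition cay_adj (S : {set gT}) (x y : gT) : bool := y * x^-1 \in S.

Definition connection_set (G S : {set gT}) : Prop :=
  S \subset G :\ 1 /\ (forall s, s \in S -> s^-1 \in S).

Definition cay_perfect_code (G S C : {set gT}) : Prop :=
  [/\ C \subset G,
      (forall x y, x \in C -> y \in C -> ~~ cay_adj S x y) &
      (forall g, g \in G :\: C -> #|[set c in C | cay_adj S g c]| = 1%N)].

Definition perfect_code_of (G H : {set gT}) : Prop :=
  exists S : {set gT}, connection_set G S /\ cay_perfect_code G S H.

End PerfectCode.

From mathcomp Require Import all_boot all_fingroup.
Set Implicit Arguments. Unset Strict Implicit. Unset Printing Implicit Defensive.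
Local Open Scope group_scope.

(* For a subgroup M, being a perfect code of Cay(G, S) means that S avoids M
   and meets every right coset M x other than M in exactly one element.  The
   coset map sends S :&: M x onto (S / K) :&: (M / K) (x K), so a connection
   set for M in G projects to one for M / K.  Conversely, a connection set of
   G / K lifts into a complement H of K, on which the coset map is injective
   because K :&: H = 1, so the single elements of the cosets lift uniquely. *)

Section SubgroupPerfectCode.
Variables (gT : finGroupType) (G M : {group gT}) (S : {set gT}).

Lemma cay_nbhd_subgroup g :
  [set c in M | cay_adj S g c] = (S :&: M :* g^-1) :* g.
Proof.
apply/setP=> c; rewrite !inE mem_rcoset !inE mem_rcoset invgK mulgKV.
by rewrite /cay_adj andbC.
Qed.

Lemma perfect_code_subgroupP : M \subset G ->
  cay_perfect_code G S M <->
  [disjoint S & M] /\ {in G :\: M, forall x, #|S :&: M :* x| = 1%N}.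
Proof.
move=> sMG; have GMV x : (x^-1 \in G :\: M) = (x \in G :\: M).
  by rewrite !inE !groupV.
rewrite /cay_perfect_code; split.
- case=> _ indepM countM; split.
    apply/pred0P=> s /=; apply/negbTE/andP=> -[Ss Ms].
    by have:= indepM 1 s (group1 M) Ms; rewrite /cay_adj invg1 mulg1 Ss.
  move=> x GMx; have:= countM x^-1.
  by rewrite cay_nbhd_subgroup card_rcoset invgK GMV; apply.
- case=> disjSM countM; split=> // [x y Mx My | g GMg].
    by rewrite /cay_adj (disjointFl disjSM) ?groupM ?groupV.
  by rewrite cay_nbhd_subgroup card_rcoset countM ?GMV.
Qed.

End SubgroupPerfectCode.

Section QuotientRcosets.
Variables (gT : finGroupType) (M K : {group gT}).
Hypothesis nsKM : K <| M.

Lemma mem_quotient_normal x :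
  x \in 'N(K) -> (coset K x \in M / K) = (x \in M).
Proof.
move=> Nx; apply/idP/idP; last exact: mem_quotient.
by move=> MKx; rewrite -(quotientGK nsKM); apply/morphpreP.
Qed.

Lemma mem_quotient_rcoset x y : x \in 'N(K) -> y \in 'N(K) ->
  (coset K x \in (M / K) :* coset K y) = (x \in M :* y).
Proof.
move=> Nx Ny; rewrite !mem_rcoset -morphV // -morphM ?groupV //.
by rewrite mem_quotient_normal // groupM ?groupV.
Qed.

Lemma quotient_setI_rcoset (S : {set gT}) y : S \subset 'N(K) -> y \in 'N(K) ->
  (S :&: M :* y) / K = S / K :&: (M / K) :* coset K y.
Proof.
move=> nKS Ny; apply/setP=> u; apply/idP/setIP.
- case/morphimP=> s Ns /setIP[Ss MYs] ->.
  by rewrite mem_quotient_rcoset // mem_morphim.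
- case=> /morphimP[s Ns Ss ->]; rewrite mem_quotient_rcoset // => MYs.
  by rewrite mem_morphim // inE Ss.
Qed.

Lemma disjoint_quotient (S : {set gT}) : S \subset 'N(K) ->
  [disjoint S / K & M / K] = [disjoint S & M].
Proof.
move=> nKS; have sKM := normal_sub nsKM.
by rewrite -!setI_eq0 -quotientIG // morphim_eq0 // subIset ?nKS.
Qed.

End QuotientRcosets.

Lemma card_quotient_TI (gT : finGroupType) (K H : {group gT}) (A : {set gT}) :
  H \subset 'N(K) -> K :&: H = 1 -> A \subset H -> #|A / K| = #|A|.
Proof.
move=> nKH tiKH sAH; have /isomP[injK _] := quotient_isom nKH tiKH.
by rewrite -(restrm_quotientE nKH sAH) card_injm.
Qed.

Section PerfectCodeQuotient.
Variables (gT : finGroupType) (G M K : {group gT}).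
Hypotheses (sMG : M \subset G) (nsKG : K <| G) (sKM : K \subset M).

Let nsKM : K <| M := normalS sKM sMG nsKG.
Let nKG : G \subset 'N(K) := normal_norm nsKG.

Lemma perfect_code_quotient :
  perfect_code_of G M -> perfect_code_of (G / K) (M / K).
Proof.
case=> S [[sSG1 invS] /(perfect_code_subgroupP S sMG)[disjSM countM]].
have sSG : S \subset G by move: sSG1; rewrite subsetD1 => /andP[].
have nKS : S \subset 'N(K) := subset_trans sSG nKG.
have disjSMK : [disjoint S / K & M / K] by rewrite disjoint_quotient.
exists (S / K); split; first split.
- by rewrite subsetD1 quotientS // (disjointFl disjSMK) ?group1.
- move=> _ /morphimP[s Ns Ss ->].
  by rewrite -morphV // mem_morphim ?groupV ?invS.
apply/(perfect_code_subgroupP (S / K) (quotientS K sMG)); split=> //.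
move=> _ /setDP[/morphimP[x Nx Gx ->]]; rewrite mem_quotient_normal // => notMx.
rewrite -quotient_setI_rcoset //.
have /cards1P[s defSMx] : #|S :&: M :* x| == 1%N by rewrite countM // inE notMx.
have /setIP[Ss _] : s \in S :&: M :* x by rewrite defSMx set11.
by rewrite defSMx quotient_set1 ?cards1 ?(subsetP nKS).
Qed.

Lemma perfect_code_lift (H : {group gT}) : K ><| H = G ->
  perfect_code_of (G / K) (M / K) -> perfect_code_of G M.
Proof.
case/sdprodP=> _ defKH nKH tiKH.
have sMGK := quotientS K sMG.
case=> Sb [[sSbG1 invSb] /(perfect_code_subgroupP Sb sMGK)[disjSbM countMK]].
pose S := H :&: coset K @*^-1 Sb.
have sSbH : Sb \subset H / K.
  by move: sSbG1; rewrite subsetD1 -defKH quotientMidl => /andP[].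
have quoS : S / K = Sb by rewrite quotient_setIpre; apply/setIidPr.
have sSH : S \subset H := subsetIl _ _.
have sSG : S \subset G by rewrite (subset_trans sSH) // -defKH mulG_subr.
have nKS : S \subset 'N(K) := subset_trans sSH nKH.
have disjSM : [disjoint S & M] by rewrite -(disjoint_quotient nsKM) ?quoS.
exists S; split; first split.
- by rewrite subsetD1 sSG (disjointFl disjSM) ?group1.
- move=> h /setIP[Hh /morphpreP[Nh Sbh]].
  by rewrite inE groupV Hh; apply/morphpreP; rewrite groupV morphV ?invSb.
apply/(perfect_code_subgroupP S sMG); split=> // x.
rewrite inE => /andP[notMx Gx].
have Nx : x \in 'N(K) := subsetP nKG x Gx.
rewrite -(card_quotient_TI nKH tiKH) ?(subset_trans (subsetIl _ _) sSH) //.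
rewrite quotient_setI_rcoset // quoS countMK // inE mem_quotient_normal //.
by rewrite notMx mem_quotient.
Qed.

End PerfectCodeQuotient.

Theorem theorem4p4 (gT : finGroupType) (G M K : {group gT})
  (sMG : M \subset G) (nKG : K <| G) (sKM : K \subset M)
  (split : exists H : {group gT}, K ><| H = G) :
  perfect_code_of G M <-> perfect_code_of (G / K) (M / K).
Proof.
split; first exact: perfect_code_quotient.
by case: split => H defG; apply: perfect_code_lift defG.
Qed.
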